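(* Let $G_0$ be the group of homeomorphisms of $\mathbb{R}$ defined in the context. Then $G_0'=G_0''$.
   Context: $G_0$ is the group of homeomorphisms of $\mathbb{R}$ generated by the following maps: - $a(t)=t+1$; - $b$, where $b(t)=t$ for $t\le 0$, $b(t)=t/(1-t)$ for $0\le t\le 1/2$, $b(t)=(3t-1)/t$ for $1/2\le t\le 1$, and $b(t)=t+1$ for $t\ge 1$; - $c$, where $c(t)=2t/(t+1)$ for $0\le t\le 1$ and $c(t)=t$ otherwise. $G_0'$ is the commutator subgroup and $G_0''=(G_0')'$. *)

From Stdlib Require Import Reals.
Open Scope R_scope.

Definition gen_a (t : R) : R := t + 1.

Definition gen_b (t : R) : R :=
  if Rle_dec t 0 then t
  else if Rle_dec t (1/2) then t / (1 - t)
  else if Rle_dec t 1 then (3 * t - 1) / t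
  else t + 1.

Definition gen_c (t : R) : R :=
  if Rle_dec 0 t then (if Rle_dec t 1 then 2 * t / (t + 1) else t) else t.

Definition is_inverse (f g : R -> R) : Prop :=
  (forall x, g (f x) = x) /\ (forall y, f (g y) = y).

Inductive gen_group (S : (R -> R) -> Prop) : (R -> R) -> Prop :=
  | gg_gen  : forall f, S f -> gen_group S f
  | gg_id   : gen_group S (fun x => x)
  | gg_comp : forall f g, gen_group S f -> gen_group S g ->
                gen_group S (fun x => f (g x))
  | gg_inv  : forall f g, gen_group S f -> is_inverse f g -> gen_group S g.

Definition G0 : (R -> R) -> Prop :=
  gen_group (fun f => f = gen_a \/ f = gen_b \/ f = gen_c).

Definition commutators (H : (R -> R) -> Prop) : (R -> R) -> Prop :=
  fun h => exists f g fi gi, H f /\ H g /\ is_inverse f fi /\ is_inverse g gi /\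
    h = (fun x => fi (gi (f (g x)))).

Definition derived (H : (R -> R) -> Prop) : (R -> R) -> Prop :=
  gen_group (commutators H).

From Stdlib Require Import Reals Lra FunctionalExtensionality Classical.
Open Scope R_scope.

(* G0'' is normal in G0, and a normal subgroup containing the commutators of
   all pairs of generators contains G0'. Two elements x, y of G0 supported in a
   common bounded interval have [x,y] in G0'': if w, z are copies of y^-1,
   x^-1 translated by integers far enough that the four supports are disjoint,
   then [x,y] is conjugate to [xz, yw], and xz, yw are commutators in G0
   because a translated copy is a conjugate by a power of a. Every pair of
   generators reduces to this case after composing with far-away elements that
   commute with the other factor. *)

Lemma is_inverse_sym f g : is_inverse f g -> is_inverse g f.
Proof. intros [H1 H2]; split; assumption. Qed.

Lemma is_inverse_comp f fi g gi : is_inverse f fi -> is_inverse g gi ->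
  is_inverse (fun t => f (g t)) (fun t => gi (fi t)).
Proof. intros [A B] [C D]; split; intro t; [rewrite A, C | rewrite D, B]; reflexivity. Qed.

Lemma is_inverse_unique f g1 g2 : is_inverse f g1 -> is_inverse f g2 -> g1 = g2.
Proof.
  intros [A B] [C D]; apply functional_extensionality; intro t.
  rewrite <- (D t) at 1; apply A.
Qed.

Ltac simpl_inverses :=
  repeat match goal with
  | H : is_inverse ?f ?g |- context [?g (?f ?y)] => rewrite (proj1 H y)
  | H : is_inverse ?f ?g |- context [?f (?g ?y)] => rewrite (proj2 H y)
  end.

Lemma gen_group_ext S f g : gen_group S f -> (forall t, f t = g t) -> gen_group S g.
Proof. intros Hf E; replace g with f; [exact Hf | exact (functional_extensionality _ _ E)]. Qed.

Lemma gen_group_min S T :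
  (forall f, S f -> gen_group T f) -> forall f, gen_group S f -> gen_group T f.
Proof.
  intros HST f Hf; induction Hf.
  - auto.
  - apply gg_id.
  - apply gg_comp; assumption.
  - eapply gg_inv; eassumption.
Qed.

Lemma commutators_gen_group S f : commutators (gen_group S) f -> gen_group S f.
Proof.
  intros (g & h & gi & hi & Hg & Hh & Ig & Ih & ->).
  exact (gg_comp _ _ _ (gg_inv _ _ _ Hg Ig)
           (gg_comp _ _ _ (gg_inv _ _ _ Hh Ih) (gg_comp _ _ _ Hg Hh))).
Qed.

Lemma derived_gen_group S f : derived (gen_group S) f -> gen_group S f.
Proof. apply gen_group_min, commutators_gen_group. Qed.

Lemma gen_group_invertible S :
  (forall s, S s -> exists si, is_inverse s si) ->
  forall f, gen_group S f -> exists fi, is_inverse f fi.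
Proof.
  intros HS f Hf; induction Hf as [f Hf | | f g _ [fi If] _ [gi Ig] | f g _ _ Ifg].
  - auto.
  - exists (fun t => t); split; reflexivity.
  - exists (fun t => gi (fi t)); apply is_inverse_comp; assumption.
  - exists f; apply is_inverse_sym; assumption.
Qed.

Definition conj_invariant (H N : (R -> R) -> Prop) : Prop :=
  forall k h hi, N k -> H h -> is_inverse h hi -> N (fun t => hi (k (h t))).

Lemma gen_group_conj_invariant_self S : conj_invariant (gen_group S) (gen_group S).
Proof.
  intros k h hi Hk Hh Hi.
  exact (gg_comp _ _ _ (gg_inv _ _ _ Hh Hi) (gg_comp _ _ _ Hk Hh)).
Qed.

Lemma gen_group_conj_invariant H S : conj_invariant H S -> conj_invariant H (gen_group S).
Proof.
  intros HS k h hi Hk Hh Hi.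
  induction Hk as [f Hf | | f g _ IHf _ IHg | f g _ IHf [C D]].
  - apply gg_gen; auto.
  - apply (gen_group_ext _ _ _ (gg_id S)); intro t; simpl_inverses; reflexivity.
  - apply (gen_group_ext _ _ _ (gg_comp _ _ _ IHf IHg)); intro t; simpl_inverses; reflexivity.
  - apply (gg_inv _ _ _ IHf); split; intro t; simpl_inverses;
      [rewrite C | rewrite D]; simpl_inverses; reflexivity.
Qed.

Lemma commutators_conj_invariant H N : conj_invariant H N -> conj_invariant H (commutators N).
Proof.
  intros HN k h hi (f & g & fi & gi & Hf & Hg & [A B] & [C D] & ->) Hh Hi.
  exists (fun t => hi (f (h t))), (fun t => hi (g (h t))),
         (fun t => hi (fi (h t))), (fun t => hi (gi (h t))).
  repeat split; auto; try (intro t; simpl_inverses; rewrite ?A, ?B, ?C, ?D; simpl_inverses; reflexivity).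
  apply functional_extensionality; intro t; simpl_inverses; reflexivity.
Qed.

Lemma derived_conj_invariant H N : conj_invariant H N -> conj_invariant H (derived N).
Proof. intro HN; apply gen_group_conj_invariant, commutators_conj_invariant, HN. Qed.

Definition commute_mod (N : (R -> R) -> Prop) (x y : R -> R) : Prop :=
  forall xi yi, is_inverse x xi -> is_inverse y yi -> N (fun t => xi (yi (x (y t)))).

Lemma commute_mod_derived H x y : H x -> H y -> commute_mod (derived H) x y.
Proof. intros Hx Hy xi yi Ix Iy; apply gg_gen; exists x, y, xi, yi; auto. Qed.

Section CommuteModulo.

Variable T : (R -> R) -> Prop.
Local Notation N := (gen_group T).

Lemma commute_mod_sym x y : commute_mod N x y -> commute_mod N y x.
Proof.
  intros Hxy yi xi Iy Ix; apply (gg_inv _ _ _ (Hxy xi yi Ix Iy)).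
  split; intro t; simpl_inverses; reflexivity.
Qed.

Lemma commute_mod_refl x : commute_mod N x x.
Proof.
  intros xi xi' Ix Ix'; rewrite (is_inverse_unique _ _ _ Ix' Ix).
  apply (gen_group_ext _ _ _ (gg_id T)); intro t; simpl_inverses; reflexivity.
Qed.

Lemma commute_mod_id_r x : commute_mod N x (fun t => t).
Proof.
  intros xi yi Ix [C _]; apply (gen_group_ext _ _ _ (gg_id T)); intro t.
  rewrite C; simpl_inverses; reflexivity.
Qed.

Section NormalSubgroup.

Variable S : (R -> R) -> Prop.
Local Notation G := (gen_group S).
Hypothesis S_invertible : forall s, S s -> exists si, is_inverse s si.
Hypothesis T_conj_invariant : conj_invariant G T.

Let N_conj_invariant : conj_invariant G N := gen_group_conj_invariant _ _ T_conj_invariant.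
Let G_invertible := gen_group_invertible S S_invertible.

(* [x1 x2, y] = x2^-1 [x1, y] x2 [x2, y] *)
Lemma commute_mod_comp_l x1 x2 y : G x1 -> G x2 ->
  commute_mod N x1 y -> commute_mod N x2 y -> commute_mod N (fun t => x1 (x2 t)) y.
Proof.
  intros G1 G2 H1 H2 xi yi Ix Iy.
  destruct (G_invertible x1 G1) as [x1i I1], (G_invertible x2 G2) as [x2i I2].
  pose proof (N_conj_invariant _ x2 x2i (H1 x1i yi I1 Iy) G2 I2) as N1.
  apply (gen_group_ext _ _ _ (gg_comp _ _ _ N1 (H2 x2i yi I2 Iy))); intro t.
  rewrite (is_inverse_unique _ _ _ Ix (is_inverse_comp _ _ _ _ I1 I2)).
  simpl_inverses; reflexivity.
Qed.

(* [x^-1, y] is [y, x] conjugated by x^-1 *)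
Lemma commute_mod_inv_l x xi y : G x -> is_inverse x xi ->
  commute_mod N x y -> commute_mod N xi y.
Proof.
  intros Gx Ix Hxy xi' yi Ixi Iy.
  pose proof (commute_mod_sym _ _ Hxy yi xi Iy Ix) as Nyx.
  apply (gen_group_ext _ _ _
    (N_conj_invariant _ xi x Nyx (gg_inv _ _ _ Gx Ix) (is_inverse_sym _ _ Ix))).
  intro t; rewrite (is_inverse_unique _ _ _ Ixi (is_inverse_sym _ _ Ix)).
  simpl_inverses; reflexivity.
Qed.

(* if w commutes with x then [x, y w] = w^-1 [x, y] w *)
Lemma commute_mod_mul_commuting_r x y w : G w -> (forall t, w (x t) = x (w t)) ->
  commute_mod N x (fun t => y (w t)) -> commute_mod N x y.
Proof.
  intros Gw Cwx Hxyw xi yi Ix Iy.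
  destruct (G_invertible w Gw) as [wi Iw].
  pose proof (N_conj_invariant _ wi w (Hxyw xi _ Ix (is_inverse_comp _ _ _ _ Iy Iw))
                (gg_inv _ _ _ Gw Iw) (is_inverse_sym _ _ Iw)) as Nc.
  assert (Cwxi : forall r, w (xi r) = xi (w r)).
  { intro r; pose proof (Cwx (xi r)) as E; rewrite (proj2 Ix r) in E.
    rewrite E; simpl_inverses; reflexivity. }
  apply (gen_group_ext _ _ _ Nc); intro t.
  simpl_inverses; rewrite Cwxi; simpl_inverses; reflexivity.
Qed.

(* if z commutes with y then [x z, y] = z^-1 [x, y] z *)
Lemma commute_mod_mul_commuting_l x y z : G z -> (forall t, z (y t) = y (z t)) ->
  commute_mod N (fun t => x (z t)) y -> commute_mod N x y.
Proof.
  intros Gz Czy Hxzy xi yi Ix Iy.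
  destruct (G_invertible z Gz) as [zi Iz].
  pose proof (N_conj_invariant _ zi z (Hxzy _ yi (is_inverse_comp _ _ _ _ Ix Iz) Iy)
                (gg_inv _ _ _ Gz Iz) (is_inverse_sym _ _ Iz)) as Nc.
  apply (gen_group_ext _ _ _ Nc); intro t.
  rewrite Czy; simpl_inverses; reflexivity.
Qed.

Lemma commute_mod_gen_group_l y :
  (forall s, S s -> commute_mod N s y) -> forall x, G x -> commute_mod N x y.
Proof.
  intros Hy x Gx; induction Gx as [s Hs | | x1 x2 G1 IH1 G2 IH2 | x xi Gx IH Ix].
  - auto.
  - apply commute_mod_sym, commute_mod_id_r.
  - apply commute_mod_comp_l; assumption.
  - apply (commute_mod_inv_l x); assumption.
Qed.

Lemma derived_sub_of_generators_commute_mod :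
  (forall s s', S s -> S s' -> commute_mod N s s') -> forall f, derived G f -> N f.
Proof.
  intros HS; apply gen_group_min.
  intros h (x & y & xi & yi & Gx & Gy & Ix & Iy & ->).
  apply (commute_mod_gen_group_l y); auto.
  intros s Hs; apply commute_mod_sym, (commute_mod_gen_group_l s); auto.
Qed.

End NormalSubgroup.

End CommuteModulo.

Definition supported_in (f : R -> R) (P : R -> Prop) : Prop := forall t, ~ P t -> f t = t.

Definition shift (T : R) (f : R -> R) : R -> R := fun t => f (t - T) + T.

Lemma supported_in_weaken f (P Q : R -> Prop) :
  supported_in f P -> (forall t, P t -> Q t) -> supported_in f Q.
Proof. intros Sf PQ t NQ; apply Sf; intro; apply NQ; auto. Qed.

Lemma supported_in_inverse f fi P : is_inverse f fi -> supported_in f P -> supported_in fi P.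
Proof. intros [A _] Sf t Nt; pose proof (A t) as E; rewrite (Sf t Nt) in E; exact E. Qed.

Lemma supported_in_comp f g P :
  supported_in f P -> supported_in g P -> supported_in (fun t => f (g t)) P.
Proof. intros Sf Sg t Nt; rewrite (Sg t Nt); apply Sf, Nt. Qed.

Lemma supported_in_shift f p q T : supported_in f (fun t => p < t < q) ->
  supported_in (shift T f) (fun t => p + T < t < q + T).
Proof. intros Sf t Nt; unfold shift; rewrite Sf; [ring | intro; apply Nt; lra]. Qed.

Lemma is_inverse_shift f fi T : is_inverse f fi -> is_inverse (shift T f) (shift T fi).
Proof.
  intros [A B]; unfold shift; split; intro t.
  - replace (f (t - T) + T - T) with (f (t - T)) by ring; rewrite A; ring.
  - replace (fi (t - T) + T - T) with (fi (t - T)) by ring; rewrite B; ring.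
Qed.

Lemma supported_in_maps_to f fi P : is_inverse f fi -> supported_in f P ->
  forall t, P t -> P (f t).
Proof.
  intros [A _] Sf t Pt; destruct (classic (P (f t))) as [Pft | Nft]; [exact Pft |].
  pose proof (f_equal fi (Sf _ Nft)) as E; rewrite !A in E; rewrite E; exact Pt.
Qed.

Lemma disjoint_supports_commute f fi g gi (P Q : R -> Prop) :
  is_inverse f fi -> is_inverse g gi -> supported_in f P -> supported_in g Q ->
  (forall t, P t -> Q t -> False) -> forall t, f (g t) = g (f t).
Proof.
  intros If Ig Sf Sg PQ t.
  destruct (classic (P t)) as [Pt | Nt].
  - pose proof (supported_in_maps_to _ _ _ If Sf t Pt) as Pft.
    rewrite (Sg t), (Sg (f t)); [reflexivity | intro; eauto | intro; eauto].
  - destruct (classic (Q t)) as [Qt | Nqt].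
    + pose proof (supported_in_maps_to _ _ _ Ig Sg t Qt) as Qgt.
      rewrite (Sf t), (Sf (g t)); [reflexivity | intro; eauto | intro; eauto].
    + rewrite (Sf t Nt), (Sg t Nqt), (Sf t Nt); reflexivity.
Qed.

Section BoundedSupport.

Variable S : (R -> R) -> Prop.
Local Notation G := (gen_group S).
Hypothesis S_invertible : forall s, S s -> exists si, is_inverse s si.
Hypothesis translation_in : G (fun t => t + 1).

Let G_invertible := gen_group_invertible S S_invertible.

Let derived2_conj_invariant : conj_invariant G (commutators (derived G)) :=
  commutators_conj_invariant _ _ (derived_conj_invariant _ _ (gen_group_conj_invariant_self S)).

Lemma translation_nat_in n : G (fun t => t + INR n).
Proof.
  induction n as [| n IHn].
  - apply (gen_group_ext _ _ _ (gg_id S)); intro t; simpl; ring.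
  - apply (gen_group_ext _ _ _ (gg_comp _ _ _ translation_in IHn)); intro t.
    rewrite S_INR; ring.
Qed.

Lemma shift_nat_in n f : G f -> G (shift (INR n) f).
Proof.
  intro Gf; apply (gg_comp _ _ _ (translation_nat_in n)), (gg_comp _ _ _ Gf).
  apply (gg_inv _ _ _ (translation_nat_in n)); split; intro t; ring.
Qed.

(* x (a^n x^-1 a^-n) = [x^-1, a^-n] *)
Lemma comp_shift_inverse_commutator n x xi : G x -> is_inverse x xi ->
  commutators G (fun t => x (shift (INR n) xi t)).
Proof.
  intros Gx Ix; exists xi, (fun t => t - INR n), x, (fun t => t + INR n).
  split; [exact (gg_inv _ _ _ Gx Ix) |].
  split; [apply (gg_inv _ _ _ (translation_nat_in n)); split; intro t; ring |].
  split; [apply is_inverse_sym, Ix |].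
  split; [split; intro t; ring | reflexivity].
Qed.

Lemma commute_mod_bounded_support p n x y : G x -> G y ->
  supported_in x (fun t => p < t < p + INR n) ->
  supported_in y (fun t => p < t < p + INR n) ->
  commute_mod (derived (derived G)) x y.
Proof.
  intros Gx Gy Sx Sy.
  destruct (G_invertible x Gx) as [xi Ix], (G_invertible y Gy) as [yi Iy].
  set (w := shift (INR n) yi); set (z := shift (INR (n + n)) xi).
  assert (Iw : is_inverse w (shift (INR n) y))
    by (apply is_inverse_shift, is_inverse_sym, Iy).
  assert (Iz : is_inverse z (shift (INR (n + n)) x))
    by (apply is_inverse_shift, is_inverse_sym, Ix).
  assert (Sw : supported_in w (fun t => p + INR n < t < p + INR n + INR n))
    by (apply supported_in_shift, (supported_in_inverse y); assumption).
  assert (Sz : supported_in z (fun t => p + INR (n + n) < t < p + INR n + INR (n + n)))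
    by (apply supported_in_shift, (supported_in_inverse x); assumption).
  rewrite plus_INR in Sz.
  assert (Syw : supported_in (fun t => y (w t)) (fun t => p < t < p + INR n + INR n)).
  { apply supported_in_comp; (eapply supported_in_weaken; [eassumption |]);
      cbv beta; intros t Ht; pose proof (pos_INR n); lra. }
  apply (commute_mod_mul_commuting_r _ S S_invertible derived2_conj_invariant _ _ w).
  { exact (shift_nat_in n _ (gg_inv _ _ _ Gy Iy)). }
  { apply (disjoint_supports_commute _ _ _ _ _ _ Iw Ix Sw Sx); cbv beta; intros; lra. }
  apply (commute_mod_mul_commuting_l _ S S_invertible derived2_conj_invariant _ _ z).
  { exact (shift_nat_in (n + n) _ (gg_inv _ _ _ Gx Ix)). }
  { apply (disjoint_supports_commute _ _ _ _ _ _ Iz (is_inverse_comp _ _ _ _ Iy Iw) Sz Syw);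
      cbv beta; intros; lra. }
  apply commute_mod_derived; apply gg_gen, comp_shift_inverse_commutator; assumption.
Qed.

End BoundedSupport.

Definition binv (t : R) : R :=
  if Rle_dec t 0 then t
  else if Rle_dec t 1 then t / (1 + t)
  else if Rle_dec t 2 then 1 / (3 - t)
  else t - 1.

Definition cinv (t : R) : R :=
  if Rle_dec 0 t then (if Rle_dec t 1 then t / (2 - t) else t) else t.

Lemma binv_b x : binv (gen_b x) = x.
Proof.
  unfold gen_b.
  destruct (Rle_dec x 0) as [h0 | h0].
  { unfold binv; destruct (Rle_dec x 0); lra. }
  destruct (Rle_dec x (1/2)) as [h1 | h1].
  { set (y := x / (1 - x)).
    assert (E : y * (1 - x) = x) by (unfold y; field; lra).
    unfold binv; destruct (Rle_dec y 0); [nra |].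
    destruct (Rle_dec y 1); [unfold y; field; lra | nra]. }
  destruct (Rle_dec x 1) as [h2 | h2].
  { set (y := (3 * x - 1) / x).
    assert (E : y * x = 3 * x - 1) by (unfold y; field; lra).
    unfold binv; destruct (Rle_dec y 0); [nra |].
    destruct (Rle_dec y 1); [nra |].
    destruct (Rle_dec y 2); [| nra].
    replace (3 - y) with (1 / x) by (unfold y; field; lra); field; lra. }
  unfold binv; destruct (Rle_dec (x + 1) 0); [lra |].
  destruct (Rle_dec (x + 1) 1); [lra |].
  destruct (Rle_dec (x + 1) 2); lra.
Qed.

Lemma b_binv y : gen_b (binv y) = y.
Proof.
  unfold binv.
  destruct (Rle_dec y 0) as [h0 | h0].
  { unfold gen_b; destruct (Rle_dec y 0); lra. }
  destruct (Rle_dec y 1) as [h1 | h1].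
  { set (x := y / (1 + y)).
    assert (E : x * (1 + y) = y) by (unfold x; field; lra).
    unfold gen_b; destruct (Rle_dec x 0); [nra |].
    destruct (Rle_dec x (1/2)); [unfold x; field; lra | nra]. }
  destruct (Rle_dec y 2) as [h2 | h2].
  { set (x := 1 / (3 - y)).
    assert (E : x * (3 - y) = 1) by (unfold x; field; lra).
    unfold gen_b; destruct (Rle_dec x 0); [nra |].
    destruct (Rle_dec x (1/2)); [nra |].
    destruct (Rle_dec x 1); [unfold x; field; lra | nra]. }
  unfold gen_b; destruct (Rle_dec (y - 1) 0); [lra |].
  destruct (Rle_dec (y - 1) (1/2)); [lra |].
  destruct (Rle_dec (y - 1) 1); lra.
Qed.

Lemma cinv_c x : cinv (gen_c x) = x.
Proof.
  unfold gen_c.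
  destruct (Rle_dec 0 x) as [h0 | h0]; [| unfold cinv; destruct (Rle_dec 0 x); lra].
  destruct (Rle_dec x 1) as [h1 | h1].
  - set (y := 2 * x / (x + 1)).
    assert (E : y * (x + 1) = 2 * x) by (unfold y; field; lra).
    unfold cinv; destruct (Rle_dec 0 y); [| nra].
    destruct (Rle_dec y 1); [unfold y; field; lra | nra].
  - unfold cinv; destruct (Rle_dec 0 x); [| lra]; destruct (Rle_dec x 1); lra.
Qed.

Lemma c_cinv y : gen_c (cinv y) = y.
Proof.
  unfold cinv.
  destruct (Rle_dec 0 y) as [h0 | h0]; [| unfold gen_c; destruct (Rle_dec 0 y); lra].
  destruct (Rle_dec y 1) as [h1 | h1].
  - set (x := y / (2 - y)).
    assert (E : x * (2 - y) = y) by (unfold x; field; lra).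
    unfold gen_c; destruct (Rle_dec 0 x); [| nra].
    destruct (Rle_dec x 1); [unfold x; field; lra | nra].
  - unfold gen_c; destruct (Rle_dec 0 y); [| lra]; destruct (Rle_dec y 1); lra.
Qed.

Definition G0_gen (f : R -> R) : Prop := f = gen_a \/ f = gen_b \/ f = gen_c.

Lemma G0_gen_invertible s : G0_gen s -> exists si, is_inverse s si.
Proof.
  intros [-> | [-> | ->]].
  - exists (fun t => t - 1); split; intro t; unfold gen_a; ring.
  - exists binv; split; [exact binv_b | exact b_binv].
  - exists cinv; split; [exact cinv_c | exact c_cinv].
Qed.

Lemma G0_a : G0 gen_a. Proof. apply gg_gen; left; reflexivity. Qed.
Lemma G0_b : G0 gen_b. Proof. apply gg_gen; right; left; reflexivity. Qed.
Lemma G0_c : G0 gen_c. Proof. apply gg_gen; right; right; reflexivity. Qed.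
Lemma G0_binv : G0 binv. Proof. exact (gg_inv _ _ _ G0_b (conj binv_b b_binv)). Qed.

Lemma G0''_conj_invariant : conj_invariant G0 (commutators (derived G0)).
Proof. apply commutators_conj_invariant, derived_conj_invariant, gen_group_conj_invariant_self. Qed.

Lemma G0_disjoint_supports_commute f g (P Q : R -> Prop) : G0 f -> G0 g ->
  supported_in f P -> supported_in g Q -> (forall t, P t -> Q t -> False) ->
  forall t, f (g t) = g (f t).
Proof.
  intros Gf Gg; destruct (gen_group_invertible _ G0_gen_invertible f Gf) as [fi If],
    (gen_group_invertible _ G0_gen_invertible g Gg) as [gi Ig].
  exact (disjoint_supports_commute _ _ _ _ _ _ If Ig).
Qed.

Lemma G0_commute_mod_supported_in_window x y : G0 x -> G0 y ->
  supported_in x (fun t => -1 < t < 5) -> supported_in y (fun t => -1 < t < 5) ->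
  commute_mod (derived (derived G0)) x y.
Proof.
  assert (W : forall t, -1 < t < 5 -> -1 < t < -1 + INR 6) by (simpl; intros; lra).
  intros Gx Gy Sx Sy; apply (commute_mod_bounded_support _ G0_gen_invertible G0_a (-1) 6);
    [assumption | assumption | exact (supported_in_weaken _ _ _ Sx W)
    | exact (supported_in_weaken _ _ _ Sy W)].
Qed.

Lemma b_left t : t <= 0 -> gen_b t = t.
Proof. intro; unfold gen_b; destruct (Rle_dec t 0); lra. Qed.

Lemma b_right t : 1 <= t -> gen_b t = t + 1.
Proof.
  intro; unfold gen_b; destruct (Rle_dec t 0); [lra |].
  destruct (Rle_dec t (1/2)); [lra |]; destruct (Rle_dec t 1); [| lra].
  replace t with 1 by lra; field.
Qed.

Lemma binv_left t : t <= 0 -> binv t = t.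
Proof. intro; unfold binv; destruct (Rle_dec t 0); lra. Qed.

Lemma binv_right t : 2 <= t -> binv t = t - 1.
Proof.
  intro; unfold binv; destruct (Rle_dec t 0); [lra |].
  destruct (Rle_dec t 1); [lra |]; destruct (Rle_dec t 2); [| lra].
  replace t with 2 by lra; field.
Qed.

Lemma c_supported : supported_in gen_c (fun t => 0 < t < 1).
Proof.
  intros t Nt; unfold gen_c; destruct (Rle_dec 0 t); [| reflexivity].
  destruct (Rle_dec t 1); [| reflexivity].
  destruct (Req_dec t 0) as [-> | ]; [field |].
  destruct (Req_dec t 1) as [-> | ]; [field |].
  exfalso; apply Nt; lra.
Qed.

(* b and a b^-1 are the translation by 1 near +oo, resp. near -oo;
   [right_cut] and [left_cut] are the translation by -1 there and the identity
   on (-oo, 3], resp. [0, oo), so the composites [b_cut] and [ab_inv_cut] are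
   compactly supported. *)
Definition ab_inv (t : R) : R := gen_a (binv t).
Definition right_cut : R -> R := shift 3 binv.
Definition left_cut (t : R) : R := gen_b (t + 1) - 2.
Definition b_cut (t : R) : R := gen_b (right_cut t).
Definition ab_inv_cut (t : R) : R := ab_inv (left_cut t).

Lemma G0_ab_inv : G0 ab_inv.
Proof. exact (gg_comp _ _ _ G0_a G0_binv). Qed.

Lemma G0_right_cut : G0 right_cut.
Proof.
  apply (gen_group_ext _ _ _ (shift_nat_in _ G0_a 3 _ G0_binv)).
  intro t; unfold right_cut, shift; simpl; replace (1 + 1 + 1) with 3 by ring; reflexivity.
Qed.

Lemma G0_left_cut : G0 left_cut.
Proof.
  assert (T2 : G0 (fun t => t - 2)).
  { apply (gg_inv _ _ _ (translation_nat_in _ G0_a 2)); split; intro t; simpl; ring. }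
  apply (gen_group_ext _ _ _
    (gg_comp _ _ _ T2 (gg_comp _ _ _ G0_b (translation_nat_in _ G0_a 1)))).
  intro t; unfold left_cut; simpl; replace (0 + 1) with 1 by ring; reflexivity.
Qed.

Lemma ab_inv_supported : supported_in ab_inv (fun t => t < 2).
Proof. intros t Nt; unfold ab_inv, gen_a; rewrite binv_right; lra. Qed.

Lemma right_cut_supported : supported_in right_cut (fun t => 3 < t).
Proof. intros t Nt; unfold right_cut, shift; rewrite binv_left; lra. Qed.

Lemma left_cut_supported : supported_in left_cut (fun t => t < 0).
Proof. intros t Nt; unfold left_cut; rewrite b_right; lra. Qed.

Lemma b_cut_supported : supported_in b_cut (fun t => 0 < t < 5).
Proof.
  intros t Nt; unfold b_cut; destruct (Rle_dec t 0).
  - rewrite right_cut_supported by lra; apply b_left; lra.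
  - unfold right_cut, shift; rewrite binv_right, b_right; lra.
Qed.

Lemma ab_inv_cut_supported : supported_in ab_inv_cut (fun t => -1 < t < 5).
Proof.
  intros t Nt; unfold ab_inv_cut; destruct (Rle_dec t 0).
  - unfold left_cut, ab_inv, gen_a; rewrite b_left, binv_left; lra.
  - rewrite left_cut_supported by lra; apply ab_inv_supported; lra.
Qed.

Lemma commute_mod_ab_inv_b : commute_mod (derived (derived G0)) ab_inv gen_b.
Proof.
  apply (commute_mod_mul_commuting_r _ _ G0_gen_invertible G0''_conj_invariant _ _ _ G0_right_cut).
  { apply (G0_disjoint_supports_commute _ _ _ _ G0_right_cut G0_ab_inv
             right_cut_supported ab_inv_supported); intros; lra. }
  apply (commute_mod_mul_commuting_l _ _ G0_gen_invertible G0''_conj_invariant _ _ _ G0_left_cut).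
  { apply (G0_disjoint_supports_commute _ _ _ _ G0_left_cut (gg_comp _ _ _ G0_b G0_right_cut)
             left_cut_supported b_cut_supported); intros; lra. }
  apply G0_commute_mod_supported_in_window.
  - exact (gg_comp _ _ _ G0_ab_inv G0_left_cut).
  - exact (gg_comp _ _ _ G0_b G0_right_cut).
  - exact ab_inv_cut_supported.
  - eapply supported_in_weaken; [exact b_cut_supported | cbv beta; intros; lra].
Qed.

Lemma commute_mod_ab_inv_c : commute_mod (derived (derived G0)) ab_inv gen_c.
Proof.
  apply (commute_mod_mul_commuting_l _ _ G0_gen_invertible G0''_conj_invariant _ _ _ G0_left_cut).
  { apply (G0_disjoint_supports_commute _ _ _ _ G0_left_cut G0_c
             left_cut_supported c_supported); intros; lra. }
  apply G0_commute_mod_supported_in_window.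
  - exact (gg_comp _ _ _ G0_ab_inv G0_left_cut).
  - exact G0_c.
  - exact ab_inv_cut_supported.
  - eapply supported_in_weaken; [exact c_supported | cbv beta; intros; lra].
Qed.

Lemma commute_mod_c_b : commute_mod (derived (derived G0)) gen_c gen_b.
Proof.
  apply (commute_mod_mul_commuting_r _ _ G0_gen_invertible G0''_conj_invariant _ _ _ G0_right_cut).
  { apply (G0_disjoint_supports_commute _ _ _ _ G0_right_cut G0_c
             right_cut_supported c_supported); intros; lra. }
  apply G0_commute_mod_supported_in_window.
  - exact G0_c.
  - exact (gg_comp _ _ _ G0_b G0_right_cut).
  - eapply supported_in_weaken; [exact c_supported | cbv beta; intros; lra].
  - eapply supported_in_weaken; [exact b_cut_supported | cbv beta; intros; lra].
Qed.

Lemma a_eq_ab_inv_b : gen_a = fun t => ab_inv (gen_b t).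
Proof. apply functional_extensionality; intro t; unfold ab_inv; rewrite binv_b; reflexivity. Qed.

Lemma generators_commute_mod s s' : G0_gen s -> G0_gen s' -> commute_mod (derived (derived G0)) s s'.
Proof.
  assert (Hab : commute_mod (derived (derived G0)) gen_a gen_b).
  { rewrite a_eq_ab_inv_b.
    apply (commute_mod_comp_l _ _ G0_gen_invertible G0''_conj_invariant _ _ _ G0_ab_inv G0_b).
    - exact commute_mod_ab_inv_b.
    - apply commute_mod_refl. }
  assert (Hac : commute_mod (derived (derived G0)) gen_a gen_c).
  { rewrite a_eq_ab_inv_b.
    apply (commute_mod_comp_l _ _ G0_gen_invertible G0''_conj_invariant _ _ _ G0_ab_inv G0_b).
    - exact commute_mod_ab_inv_c.
    - apply commute_mod_sym, commute_mod_c_b. }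
  pose proof commute_mod_c_b as Hcb.
  intros [-> | [-> | ->]] [-> | [-> | ->]];
    solve [apply commute_mod_refl | assumption | apply commute_mod_sym; assumption].
Qed.

Theorem mainTheorem5 :
  forall f : R -> R, derived G0 f <-> derived (derived G0) f.
Proof.
  intro f; split.
  - exact (derived_sub_of_generators_commute_mod _ _ G0_gen_invertible G0''_conj_invariant
             generators_commute_mod f).
  - apply derived_gen_group.
Qed.
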